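(* There exists an absolute constant $c > 0$ such that for every even $n \in \mathbb{N}$ and every integer $m \geqslant \sqrt{n}$, the number of sum-free subsets of $[n]$ of size $m$ is at least $2^{cn/m} \binom{n/2}{m}$.
   Context: $[n] = \{1,\ldots,n\}$. A set of integers is sum-free if it contains no $x,y,z$ (not necessarily distinct) with $x+y=z$. The paper writes the conclusion as $2^{\Omega(n/m)}\binom{n/2}{m}$, with $\Omega(\cdot)$ hiding an absolute constant. *)

From Stdlib Require Import Reals.
From mathcomp Require Import all_boot.

(* Subsets of [n] = {1,...,n} are encoded as sets A : {set 'I_n}, where the
   ordinal i stands for the integer i+1. *)

Definition sum_free (n : nat) (A : {set 'I_n}) : bool :=
  [forall x in A, forall y in A, forall z in A, (x.+1 + y.+1 != z.+1)%N].

Definition num_sum_free (n m : nat) : nat :=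
  #|[set A : {set 'I_n} | sum_free n A & (#|A| == m)%N]|%N.

(* Write n = 2N and q = N / m.  If q < 3000, the m-subsets of the odd integers
   and those of {N+1, ..., 2N} are sum-free, and only C(N-1, m) sets are of both
   kinds, so there are at least (1 + m/N) C(N, m) >= 2^(cn/m) C(N, m) of them.
   If q >= 3000, let t = q / 320, k = 4t and d = k(2q+3).  Pick k elements X in
   (N-d, N], k elements Y in (N, N+d] and m - 2k elements in (N+d, 2N] avoiding
   the at most 2k^2 sums X + X and X + Y: the union is sum-free and determines
   the three parts.  Since C(d, k)^2 >= (4(q+1))^(2k) / 4, while giving up 2k
   elements of the top interval costs at most (a/(m-2k))^(2k) <= ((40/39)(q+1))^(2k)
   and shrinking it to a = N - d - 2k^2 costs at most 3^(9t+1), the count is at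
   least (16 (39/40)^2)^k / (4 3^(9t+1)) C(N, m) >= 2^t C(N, m) >= 2^(cn/m) C(N, m). *)

From Stdlib Require Import Reals Lra.
From mathcomp Require Import all_boot zify.

Set Implicit Arguments.
Unset Strict Implicit.

Lemma leq_expn2r m n e : m <= n -> m ^ e <= n ^ e.
Proof. by move=> lemn; elim: e => // e IH; rewrite !expnS leq_mul. Qed.

Lemma bernoulli_expn x k : x ^ k * (x + k) <= (x + 1) ^ k * x.
Proof.
elim: k => [|k IH]; first by rewrite addn0.
by move: IH; rewrite !expnS; nia.
Qed.

Lemma expn_succ_ge k : 0 < k -> 2 * k ^ k <= k.+1 ^ k.
Proof.
move=> k_gt0; rewrite -(leq_pmul2r k_gt0) -[k.+1]addn1.
by apply: leq_trans (bernoulli_expn k k); rewrite addnn -mul2n mulnCA mulnA.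
Qed.

Lemma expn2_fact_le k : 2 ^ k * k`! <= 2 * k ^ k.
Proof.
elim: k => [|k IH] //; case: (posnP k) => [-> // | k_gt0].
have := expn_succ_ge k_gt0.
rewrite factS expnS expnSr; nia.
Qed.

Lemma leq_expn_ffact d k : (d - k) ^ k <= d ^_ k.
Proof.
elim: k d => [|k IH] [|d] //; first by rewrite sub0n exp0n.
by rewrite ffactSS expnS subSS leq_mul // (leq_trans (leq_subr k d)).
Qed.

Lemma bin_ge_expn d k : 2 ^ k * (d - k) ^ k <= 'C(d, k) * (2 * k ^ k).
Proof.
apply: (@leq_trans (2 ^ k * ('C(d, k) * k`!))).
  by rewrite leq_mul2l bin_ffact leq_expn_ffact orbT.
by rewrite mulnCA leq_mul2l expn2_fact_le orbT.
Qed.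

Lemma bin_subn_le a m j : j <= m -> 'C(a, m) * (m - j) ^ j <= 'C(a, m - j) * a ^ j.
Proof.
elim: j => [|j IH] lejm; first by rewrite subn0 !expn0.
set i := m - j.+1; have e : m - j = i.+1 by rewrite /i; lia.
have step : i * 'C(a, i.+1) <= a * 'C(a, i).
  apply: (@leq_trans (i.+1 * 'C(a, i.+1))); first by rewrite leq_mul2r leqnSn orbT.
  by rewrite mul_bin_left leq_mul2r leq_subr orbT.
have := IH (ltnW lejm); rewrite e => IHj.
rewrite expnSr expnS mulnA.
apply: (@leq_trans ('C(a, i.+1) * a ^ j * i)).
  rewrite leq_mul2r; apply/orP; right; apply: leq_trans IHj.
  by rewrite leq_mul2l leq_expn2r ?orbT.
by rewrite mulnAC [_ * i]mulnC mulnA [_ * a]mulnC leq_mul2r step orbT.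
Qed.

Lemma bin_succ_le a b m : a <= b.+1 -> 'C(b.+1, m) * (a - m) <= a * 'C(b, m).
Proof.
move=> leab; case: (leqP a m) => [leam | ltma].
  by move: leam; rewrite -subn_eq0 => /eqP ->; rewrite muln0.
have gt0 : 0 < b.+1 - m by lia.
rewrite -(leq_pmul2r gt0) mulnAC [_ * (b.+1 - m)]mulnC -mul_bin_down /=.
have [s es] : exists s, a = m + s by exists (a - m); lia.
have [r er] : exists r, b.+1 = m + r by exists (b.+1 - m); lia.
have les : s <= r by lia.
rewrite es er !addKn; nia.
Qed.

Lemma bin_addn_le a D m : 'C(a + D, m) * (a - m) ^ D <= 'C(a, m) * a ^ D.
Proof.
elim: D => [|D IH]; first by rewrite addn0.
rewrite addnS !expnS mulnA.
apply: (@leq_trans (a * 'C(a + D, m) * (a - m) ^ D)).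
  by rewrite leq_mul2r bin_succ_le ?orbT //; lia.
by rewrite -mulnA [X in _ <= X]mulnCA leq_mul2l IH orbT.
Qed.

Lemma cardsU_disjoint (T : finType) (A B : {set T}) :
  [disjoint A & B] -> #|A :|: B| = #|A| + #|B|.
Proof. by move=> AB; apply/eqP; rewrite (leq_card_setU A B).2. Qed.

Lemma setIU3_disjoint (T : finType) (A B C P : {set T}) :
  A \subset P -> [disjoint B & P] -> [disjoint C & P] -> (A :|: B :|: C) :&: P = A.
Proof.
by move=> /setIidPl AP /disjoint_setI0 BP /disjoint_setI0 CP; rewrite !setIUl AP BP CP !setU0.
Qed.

Definition draws (T : finType) (A : {set T}) j := [set B : {set T} | B \subset A & #|B| == j].

Definition ord_interval n lo hi : {set 'I_n} := [set i : 'I_n | lo <= i < hi].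

Lemma card_ord_interval n lo hi : hi <= n -> #|ord_interval n lo hi| = hi - lo.
Proof.
move=> le_hi; have shift_lt (j : 'I_(hi - lo)) : lo + j < n.
  by have := ltn_ord j; lia.
pose shift j := Ordinal (shift_lt j).
have shift_inj : injective shift.
  by move=> j1 j2 /(congr1 val) /= /addnI /val_inj.
suff -> : ord_interval n lo hi = shift @: setT by rewrite card_imset // cardsT card_ord.
apply/setP => i; rewrite inE; apply/idP/imsetP => [/andP[lo_i i_hi] | [j _ ->]].
  have j_lt : i - lo < hi - lo by lia.
  by exists (Ordinal j_lt); rewrite ?inE //; apply: val_inj => /=; lia.
by have := ltn_ord j; rewrite /=; lia.
Qed.

Lemma disjoint_ord_interval n lo1 hi1 lo2 hi2 :
  hi1 <= lo2 -> [disjoint ord_interval n lo1 hi1 & ord_interval n lo2 hi2].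
Proof.
move=> le12; rewrite -setI_eq0; apply/eqP/setP => i; rewrite !inE.
by apply/negbTE/negP => /andP[/andP[_ ?] /andP[? _]]; lia.
Qed.

Lemma subset_ord_interval n lo hi (A : {set 'I_n}) x :
  A \subset ord_interval n lo hi -> x \in A -> lo <= x < hi.
Proof. by move=> /subsetP sA /sA; rewrite inE. Qed.

Lemma sum_freeP n (A : {set 'I_n}) :
  reflect (forall x y z, x \in A -> y \in A -> z \in A -> x.+1 + y.+1 != z.+1)
          (sum_free n A).
Proof.
apply: (iffP idP) => [sfA x y z xA yA zA | H].
  by move: sfA => /forall_inP/(_ x xA)/forall_inP/(_ y yA)/forall_inP/(_ z zA).
by apply/forall_inP => x xA; apply/forall_inP => y yA; apply/forall_inP => z zA; apply: H.
Qed.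

(* [ord_sum (x, y)] encodes the integer (x+1)+(y+1); the default [x] is a junk value
   used only when that sum exceeds [n]. *)
Definition ord_sum {n} (p : 'I_n * 'I_n) : 'I_n := insubd p.1 (p.1 + p.2).+1.

Lemma ord_sumE n (x y z : 'I_n) : x.+1 + y.+1 = z.+1 -> ord_sum (x, y) = z.
Proof.
move=> xyz; apply: val_inj; rewrite /ord_sum val_insubd /=.
by have := ltn_ord z; case: ifP; lia.
Qed.

Section Construction.

Variables N d k m : nat.
Hypothesis d_small : 3 * d <= N.

Local Notation n := (N + N).

Definition low := ord_interval n (N - d) N.
Definition mid := ord_interval n N (N + d).
Definition high := ord_interval n (N + d) n.

Definition forbidden (X Y : {set 'I_n}) := ord_sum @: setX X (X :|: Y).

Lemma forbiddenP (X Y : {set 'I_n}) (x y z : 'I_n) :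
  x \in X -> y \in X :|: Y -> x.+1 + y.+1 = z.+1 -> z \in forbidden X Y.
Proof. by move=> xX yXY /ord_sumE <-; apply/imsetP; exists (x, y); rewrite // in_setX xX. Qed.

Lemma card_forbidden (X Y : {set 'I_n}) : #|forbidden X Y| <= #|X| * (#|X| + #|Y|).
Proof.
apply: leq_trans (leq_imset_card _ _) _.
by rewrite cardsX leq_mul2l (leq_card_setU X Y) orbT.
Qed.

Lemma sum_free_union (X Y Z : {set 'I_n}) :
  X \subset low -> Y \subset mid -> Z \subset high :\: forbidden X Y ->
  sum_free n (X :|: Y :|: Z).
Proof.
move=> sX sY sZ; have sZh := subset_trans sZ (subsetDl _ _).
have inX := subset_ord_interval sX; have inY := subset_ord_interval sY.
have inZ := subset_ord_interval sZh.
have lo w : w \in X :|: Y :|: Z -> N - d <= w.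
  by rewrite !inE => /orP[/orP[/inX | /inY] | /inZ]; lia.
apply/sum_freeP => x y z xU yU zU; apply/eqP => xyz.
move: (ltn_ord z) (lo x xU) (lo y yU) => z_lt x_ge y_ge.
case/setUP: zU => [/setUP[/inX | /inY] | zZ]; try lia.
have [/inZ | xZ] := boolP (x \in Z); first lia.
have [/inZ | yZ] := boolP (y \in Z); first lia.
have /setDP[_ /negP] := subsetP sZ z zZ; apply.
rewrite !inE (negbTE xZ) (negbTE yZ) !orbF in xU yU.
case/orP: xU => [xX | xY]; first by apply: forbiddenP xX _ xyz; rewrite inE.
case/orP: yU => [yX | /inY y_mid]; last by have := inY x xY; clear -xyz z_lt y_mid; lia.
by apply: (forbiddenP (y := x) yX); [rewrite inE xY orbT | rewrite addnC].
Qed.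

Lemma disjoint_low_mid : [disjoint low & mid].
Proof. exact: disjoint_ord_interval. Qed.

Lemma disjoint_low_high : [disjoint low & high].
Proof. by apply: disjoint_ord_interval; rewrite leq_addr. Qed.

Lemma disjoint_mid_high : [disjoint mid & high].
Proof. exact: disjoint_ord_interval. Qed.

Section Blocks.

Variables X Y Z : {set 'I_n}.
Hypotheses (sX : X \subset low) (sY : Y \subset mid) (sZ : Z \subset high).

Lemma card_union_blocks : #|X :|: Y :|: Z| = #|X| + #|Y| + #|Z|.
Proof.
rewrite !cardsU_disjoint //; first exact: disjointW sX sY disjoint_low_mid.
rewrite -setI_eq0 setIUl !disjoint_setI0 ?setU0 //.
  exact: disjointW sY sZ disjoint_mid_high.
exact: disjointW sX sZ disjoint_low_high.
Qed.

Lemma union_blocksIlow : (X :|: Y :|: Z) :&: low = X.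
Proof.
apply: setIU3_disjoint sX _ _; rewrite disjoint_sym.
  exact: disjointWr sY disjoint_low_mid.
exact: disjointWr sZ disjoint_low_high.
Qed.

Lemma union_blocksImid : (X :|: Y :|: Z) :&: mid = Y.
Proof.
rewrite [X :|: Y]setUC; apply: setIU3_disjoint sY _ _.
  exact: disjointWl sX disjoint_low_mid.
by rewrite disjoint_sym; exact: disjointWr sZ disjoint_mid_high.
Qed.

Lemma union_blocksIhigh : (X :|: Y :|: Z) :&: high = Z.
Proof.
rewrite setUC setUA; apply: setIU3_disjoint sZ _ _.
  exact: disjointWl sX disjoint_low_high.
exact: disjointWl sY disjoint_mid_high.
Qed.

End Blocks.

Lemma card_high_free (X Y : {set 'I_n}) :
  #|X| = k -> #|Y| = k -> N - d - 2 * k * k <= #|high :\: forbidden X Y|.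
Proof.
move=> cX cY; rewrite cardsD card_ord_interval // subnDl leq_sub2l //.
apply: leq_trans (subset_leq_card (subsetIr _ _)) _; apply: leq_trans (card_forbidden X Y) _.
by rewrite cX cY addnn -mul2n mulnCA mulnA.
Qed.

Definition triple := ({set 'I_n} * {set 'I_n} * {set 'I_n})%type.

Definition triples := [set p : triple | [&& p.1.1 \in draws low k, p.1.2 \in draws mid k &
  p.2 \in draws (high :\: forbidden p.1.1 p.1.2) (m - 2 * k)]].

Lemma card_triples :
  'C(d, k) * 'C(d, k) * 'C(N - d - 2 * k * k, m - 2 * k) <= #|triples|.
Proof.
pose P (XY : {set 'I_n} * {set 'I_n}) := (XY.1 \in draws low k) && (XY.2 \in draws mid k).
pose Q (XY : {set 'I_n} * {set 'I_n}) Z := Z \in draws (high :\: forbidden XY.1 XY.2) (m - 2 * k).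
have -> : #|triples| = \sum_(XY | P XY) \sum_(Z | Q XY Z) 1.
  by rewrite pair_big_dep -sum1_card; apply: eq_bigl => p; rewrite inE andbA.
apply: (@leq_trans (\sum_(XY | P XY) 'C(N - d - 2 * k * k, m - 2 * k))).
  rewrite sum_nat_const; apply: leq_mul => //.
  have -> : #|[pred XY | P XY]| = #|setX (draws low k) (draws mid k)|.
    by apply: eq_card => -[X Y]; rewrite in_setX.
  have d_le : d <= N by lia.
  by rewrite cardsX !cards_draws !card_ord_interval ?leq_addr ?leq_add2l ?subKn ?addKn.
apply: leq_sum => -[X Y] /andP[]; rewrite /= !inE => /andP[_ /eqP cX] /andP[_ /eqP cY].
by rewrite sum1_card cards_draws leq_bin2l // card_high_free.
Qed.

Hypothesis k_small : 2 * k <= m.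

Lemma triplesP X Y Z : (X, Y, Z) \in triples ->
  [/\ X \subset low, Y \subset mid, Z \subset high :\: forbidden X Y & #|X :|: Y :|: Z| = m].
Proof.
rewrite !inE /= => /and3P[/andP[sX /eqP cX] /andP[sY /eqP cY] /andP[sZ /eqP cZ]].
split=> //; rewrite card_union_blocks // ?cX ?cY ?cZ; first lia.
exact: subset_trans sZ (subsetDl _ _).
Qed.

Lemma card_triples_le_num : #|triples| <= num_sum_free n m.
Proof.
pose union3 (p : triple) := p.1.1 :|: p.1.2 :|: p.2.
have union3_inj : {in triples &, injective union3}.
  move=> [[X Y] Z] [[X' Y'] Z'] /triplesP[sX sY /subsetDP[sZ _] _].
  move=> /triplesP[sX' sY' /subsetDP[sZ' _] _]; rewrite /union3 /= => e.
  have -> : X = X' by rewrite -(union_blocksIlow sX sY sZ) e union_blocksIlow.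
  have -> : Y = Y' by rewrite -(union_blocksImid sX sY sZ) e union_blocksImid.
  by rewrite -(union_blocksIhigh sX sY sZ) e union_blocksIhigh.
rewrite -(card_in_imset union3_inj); apply: subset_leq_card.
apply/subsetP => _ /imsetP[[[X Y] Z] /triplesP[sX sY sZ cU] ->].
by rewrite inE sum_free_union //= cU eqxx.
Qed.

Lemma num_sum_free_ge_blocks :
  'C(d, k) * 'C(d, k) * 'C(N - d - 2 * k * k, m - 2 * k) <= num_sum_free n m.
Proof. exact: leq_trans card_triples card_triples_le_num. Qed.

End Construction.

Lemma num_sum_free0_gt0 n : 0 < num_sum_free n 0.
Proof.
rewrite card_gt0; apply/set0Pn; exists set0.
by rewrite inE cards0 eqxx andbT; apply/sum_freeP => x; rewrite inE.
Qed.

Lemma sum_freeS n (A B : {set 'I_n}) : A \subset B -> sum_free n B -> sum_free n A.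
Proof.
move=> /subsetP sAB /sum_freeP sfB.
by apply/sum_freeP => x y z /sAB xB /sAB yB /sAB zB; exact: sfB.
Qed.

Lemma draws_sum_free n m (B : {set 'I_n}) :
  sum_free n B -> draws B m \subset [set A : {set 'I_n} | sum_free n A & #|A| == m].
Proof.
move=> sfB; apply/subsetP => A; rewrite !inE => /andP[sAB ->].
by rewrite (sum_freeS sAB sfB).
Qed.

Lemma drawsI (T : finType) (A B : {set T}) j : draws A j :&: draws B j = draws (A :&: B) j.
Proof.
apply/setP => C; rewrite /draws !inE subsetI.
by case: (C \subset A); case: (C \subset B); case: (#|C| == j).
Qed.

Section Halves.

Variable N : nat.
Local Notation n := (N + N).

(* The odd integers of [n], recalling that the ordinal [i] stands for [i+1]. *)
Definition odds := [set i : 'I_n | ~~ odd i].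
Definition upper := ord_interval n N n.

Lemma sum_free_odds : sum_free n odds.
Proof.
apply/sum_freeP => x y z; rewrite !inE => ex ey ez; apply/eqP => xyz.
by have /eqP := congr1 odd xyz; rewrite /= oddD /= (negbTE ex) (negbTE ey) (negbTE ez).
Qed.

Lemma sum_free_upper : sum_free n upper.
Proof.
apply/sum_freeP => x y z; rewrite !inE => /andP[x_ge _] /andP[y_ge _] /andP[_ z_lt].
by apply/eqP; lia.
Qed.

Lemma card_odds : #|odds| = N.
Proof.
have double_lt (j : 'I_N) : j.*2 < n by rewrite -addnn; have := ltn_ord j; lia.
pose double j := Ordinal (double_lt j).
have double_inj : injective double.
  by move=> j1 j2 /(congr1 val) /= /(congr1 half); rewrite !doubleK => /val_inj.
suff -> : odds = double @: setT by rewrite card_imset // cardsT card_ord.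
apply/setP => i; rewrite inE; apply/idP/imsetP => [ei | [j _ ->]]; last by rewrite odd_double.
have e2 : i = (i./2).*2 :> nat by rewrite -[LHS]odd_double_half (negbTE ei).
have half_lt : i./2 < N by rewrite -ltn_double -e2 -addnn.
by exists (Ordinal half_lt); rewrite ?inE //; apply: val_inj.
Qed.

Lemma card_odds_upper : 1 < N -> #|odds :&: upper| <= N.-1.
Proof.
move=> N_gt1; have card_upper : #|upper| = N by rewrite card_ord_interval // addKn.
rewrite -ltnS prednK ?(ltnW N_gt1) // -[X in _ < X]card_upper.
apply: proper_card; rewrite properE subsetIr /=; apply/negP => /subsetP s.
have oddN : exists i : 'I_n, odd i && (N <= i).
  have lt1 : N < n by lia.
  have lt2 : N.+1 < n by lia.
  by case: (boolP (odd N)) => [oN | eN]; [exists (Ordinal lt1) | exists (Ordinal lt2)];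
    rewrite /= ?oN ?leqnn //= (negbTE eN) leqnSn.
case: oddN => i /andP[oi Ni]; have /s : i \in upper by rewrite inE Ni ltn_ord.
by rewrite !inE oi.
Qed.

Lemma num_sum_free_ge_halves m :
  1 < N -> 'C(N, m) * (N + m) <= num_sum_free n m * N.
Proof.
move=> N_gt1; case: (ltnP N m) => [ltNm | leNm]; first by rewrite bin_small.
set FO := draws odds m; set FU := draws upper m.
have cO : #|FO| = 'C(N, m) by rewrite cards_draws card_odds.
have cU : #|FU| = 'C(N, m) by rewrite cards_draws card_ord_interval // addKn.
have cI : #|FO :&: FU| <= 'C(N.-1, m).
  by rewrite drawsI cards_draws leq_bin2l // card_odds_upper.
have cOU : #|FO :|: FU| <= num_sum_free n m.
  by apply: subset_leq_card; rewrite subUset !draws_sum_free ?sum_free_odds ?sum_free_upper.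
have cIO : #|FO :&: FU| <= #|FO| by apply/subset_leq_card/subsetIl.
have := mul_bin_down N m; rewrite cardsU cO cU in cOU; rewrite cO in cIO.
nia.
Qed.

End Halves.

Section RealBounds.
Local Open Scope R_scope.

Lemma INR_expn a b : INR (a ^ b)%N = INR a ^ b.
Proof. by elim: b => [|b IH] //; rewrite expnS mult_INR IH. Qed.

Lemma INR_leq a b : (a <= b)%N -> INR a <= INR b.
Proof. by move/leP; apply: le_INR. Qed.

Lemma exp_pow x j : exp x ^ j = exp (INR j * x).
Proof.
elim: j => [|j IH]; first by rewrite Rmult_0_l exp_0.
by rewrite S_INR -tech_pow_Rmult IH -exp_plus; f_equal; ring.
Qed.

Lemma pow_ratio_le A M (D E : nat) : 0 < M < A -> INR D * M <= INR E * (A - M) ->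
  A ^ D <= 3 ^ E * (A - M) ^ D.
Proof.
move=> [M_gt0 M_lt_A] DM_le; set y := M / (A - M).
have y_gt0 : 0 < y by apply: Rdiv_lt_0_compat; lra.
have eA : A = (A - M) * (1 + y) by rewrite /y; field; lra.
rewrite {1}eA Rpow_mult_distr [3 ^ E * _]Rmult_comm.
apply: Rmult_le_compat_l; first by apply: pow_le; lra.
have Dy_le : INR D * y <= INR E.
  apply: (Rmult_le_reg_r (A - M)); first lra.
  by rewrite Rmult_assoc /y /Rdiv Rmult_assoc Rinv_l; lra.
apply: Rle_trans (_ : exp y ^ D <= _).
  by apply: pow_incr; split; [lra | exact: exp_ineq1_le].
rewrite exp_pow; apply: Rle_trans (_ : exp (INR E * 1) <= _).
  by rewrite Rmult_1_r; case: Dy_le => [lt | ->]; [left; exact: exp_increasing | right].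
by rewrite -exp_pow; apply: pow_incr; split; [left; exact: exp_pos | exact: exp_le_3].
Qed.

Lemma pow_gain t : (9 <= t)%N ->
  4 * 3 ^ (9 * t + 1) * 2 ^ t <= (16 * (39 / 40) ^ 2) ^ (4 * t).
Proof.
move=> t_ge; rewrite pow_add !pow_mult.
set u := 3 ^ 9; set v := (16 * (39 / 40) ^ 2) ^ 4.
have uv : 135 / 100 * (u * 2) <= v by rewrite /u /v; lra.
have ut_gt0 : 0 < u ^ t * 2 ^ t by rewrite -Rpow_mult_distr; apply: pow_lt; rewrite /u; lra.
have gain : 12 <= (135 / 100) ^ t.
  apply: Rle_trans (_ : (135 / 100) ^ 9 <= _); first lra.
  by apply: Rle_pow; [lra | exact/leP].
have : (135 / 100 * (u * 2)) ^ t <= v ^ t by apply: pow_incr; split; [rewrite /u; lra | exact: uv].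
rewrite (Rpow_mult_distr (135 / 100)) (Rpow_mult_distr u 2) pow_1; nra.
Qed.

Lemma exp_le_1_add_2x x : 0 <= x <= 1 / 2 -> exp x <= 1 + 2 * x.
Proof.
move=> x_bd; have := exp_ineq1_le (- x).
have : exp x * exp (- x) = 1 by rewrite -exp_plus Rplus_opp_r exp_0.
have := exp_pos x; nra.
Qed.

Lemma Rpower2_small_ratio (N m : R) : 0 < m -> 0 < N -> N < 3000 * m ->
  Rpower 2 (1 / 100000000 * (N + N) / m) * N <= N + m.
Proof.
move=> m_gt0 N_gt0 N_lt; set x := 1 / 100000000 * (N + N) / m.
have xm : x * m = 1 / 100000000 * (N + N) by rewrite /x; field; lra.
have x_ge0 : 0 <= x.
  by apply: Rmult_le_pos; [lra | left; apply: Rinv_0_lt_compat].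
have x_le : x <= 1 / 2 by apply: (Rmult_le_reg_r m) => //; rewrite xm; lra.
have pow2_le : Rpower 2 x <= exp x.
  have -> : exp x = Rpower (exp 1) x by rewrite /Rpower ln_exp Rmult_1_r.
  by apply: Rle_Rpower_l => //; have := exp_ineq1_le 1; lra.
have xN_le : 2 * x * N <= m.
  apply: (Rmult_le_reg_r m) => //.
  have -> : 2 * x * N * m = 2 * N * (x * m) by ring.
  by rewrite xm; nra.
have := exp_le_1_add_2x (conj x_ge0 x_le); nra.
Qed.

End RealBounds.

Section LargeRatio.

(* [q] and [t] stand for [N %/ m] and [q %/ 320], given by their defining inequalities. *)
Variables N m q t : nat.
Hypotheses (m_sq : N + N <= m * m) (m_gt0 : 0 < m) (q_large : 3000 <= q).
Hypotheses (qm_le : q * m <= N) (N_lt_qm : N < q.+1 * m).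
Hypotheses (t_le : t * 320 <= q) (q_lt_t : q < t.+1 * 320).

Let k := 4 * t.
Let d := k * (2 * q + 3).
Let D := d + 2 * k * k.
Let a := N - D.

Lemma q_le_half_m : 2 * q <= m.
Proof. have := qm_le; rewrite -(leq_pmul2r m_gt0); nia. Qed.

Lemma q_sq_le : 2 * q * q <= N.
Proof. by apply: leq_trans qm_le; rewrite mulnC leq_mul2l q_le_half_m orbT. Qed.

Lemma t_ge : 9 <= t.
Proof. lia. Qed.

Lemma m_le_N : 3000 * m <= N.
Proof. by apply: leq_trans qm_le; rewrite leq_mul2r q_large orbT. Qed.

Lemma d_le : 75 * d <= N.
Proof.
have := leq_mul t_le (leqnn (2 * q + 3)); have := leq_mul q_large (leqnn q).
by have := q_sq_le; rewrite /d /k; lia.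
Qed.

Lemma k_small : 2 * k <= m.
Proof. by have := t_le; have := q_le_half_m; rewrite /k; lia. Qed.

Lemma k_sq_small : 3200 * (2 * k * k) <= N.
Proof.
by have := leq_mul t_le t_le; have := q_sq_le; rewrite /k; lia.
Qed.

Lemma D_small : 70 * D <= N.
Proof. by have := d_le; have := k_sq_small; rewrite /D; lia. Qed.

Lemma m_lt_a : m < a.
Proof. by have := D_small; have := m_le_N; rewrite /a; lia. Qed.

Lemma a_add_D : a + D = N.
Proof. by have := D_small; rewrite /a; lia. Qed.

Lemma d_sub_k : d - k = 2 * k * q.+1.
Proof. by rewrite /d; lia. Qed.

Lemma N_le_q_mul_m_sub : 39 * N <= 40 * (q.+1 * (m - 2 * k)).
Proof.
have kq : 80 * k * q.+1 <= N.
  have := leq_mul t_le (leqnn q.+1); have := leq_mul q_large (leqnn q).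
  by have := q_sq_le; rewrite /k; lia.
by rewrite mulnBr; have := N_lt_qm; have := k_small; lia.
Qed.

Lemma N_lt_t : N < 320 * t.+1 * m.
Proof.
by apply: leq_trans N_lt_qm _; rewrite leq_pmul2r //; lia.
Qed.

Lemma D_mul_m : D * m <= (9 * t + 1) * (a - m).
Proof.
have sum_small : 9 * D + 21 * m + 32 * t * m <= N.
  have := leq_trans (leq_mul t_le (leqnn m)) qm_le.
  by have := D_small; have := m_le_N; lia.
have := leq_mul (leqnn t) sum_small; have := leq_mul (leqnn t) qm_le.
have := D_small; rewrite /a -subnDA mulnBr /D /d /k; lia.
Qed.

Lemma k_gt0 : 0 < k.
Proof. by rewrite /k; lia. Qed.

Lemma bin_d_k_ge : (4 * q.+1) ^ k <= 2 * 'C(d, k).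
Proof.
rewrite -(@leq_pmul2r (k ^ k)) ?expn_gt0 ?k_gt0 // -mulnA -expnMn.
have e : 4 * q.+1 * k = 2 * (d - k) by rewrite d_sub_k; lia.
by rewrite e expnMn mulnCA; exact: bin_ge_expn.
Qed.

Local Open Scope R_scope.

Let E := (9 * t + 1)%N.

Lemma bin_N_le : INR 'C(N, m) <= 3 ^ E * INR 'C(a, m).
Proof.
have am : INR (a - m) = INR a - INR m.
  by apply: minus_INR; apply/leP; exact: ltnW m_lt_a.
have am_gt0 : 0 < INR a - INR m.
  by rewrite -am; apply: lt_0_INR; apply/ltP; rewrite subn_gt0 m_lt_a.
have ratio : INR a ^ D <= 3 ^ E * (INR a - INR m) ^ D.
  apply: pow_ratio_le; first by split; [apply: lt_0_INR; apply/ltP | lra].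
  by have := INR_leq D_mul_m; rewrite !mult_INR am.
have := INR_leq (bin_addn_le a D m); rewrite a_add_D !mult_INR !INR_expn am => h.
have pow_gt0 : 0 < (INR a - INR m) ^ D by apply: pow_lt.
apply: (Rmult_le_reg_r _ _ _ pow_gt0); apply: Rle_trans h _.
have := pos_INR 'C(a, m); nra.
Qed.

Lemma a_le_q_mul_m_sub : 39 / 40 * INR a <= INR q.+1 * INR (m - 2 * k).
Proof.
have := INR_leq N_le_q_mul_m_sub; have := INR_leq (leq_subr D N : (a <= N)%N).
rewrite !mult_INR (INR_IZR_INZ 39) (INR_IZR_INZ 40).
by move: (INR q.+1) => Q /=; lra.
Qed.

Let G := 16 * (39 / 40) ^ 2.

Lemma blocks_gain : G ^ k * INR 'C(a, m) <= 4 * INR (num_sum_free (N + N) m).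
Proof.
have d_small : (3 * d <= N)%N by have := d_le; lia.
set num := INR (num_sum_free _ _); set Ca := INR 'C(a, m); set Cb := INR 'C(a, m - 2 * k).
set Cd := INR 'C(d, k); set A := INR a; set Q := INR q.+1; set M := INR (m - 2 * k).
have blocks : Cd * Cd * Cb <= num.
  by have := INR_leq (num_sum_free_ge_blocks d_small k_small); rewrite !mult_INR -subnDA.
have Cd_ge : (4 * Q) ^ k <= 2 * Cd.
  by have := INR_leq bin_d_k_ge; rewrite !mult_INR INR_expn mult_INR (INR_IZR_INZ 4).
have Cb_ge : Ca * M ^ (2 * k) <= Cb * A ^ (2 * k).
  by have := INR_leq (bin_subn_le a k_small); rewrite !mult_INR !INR_expn.
have QM_ge : 39 / 40 * A <= Q * M := a_le_q_mul_m_sub.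
have Ca_ge0 : 0 <= Ca := pos_INR _.
have M_ge0 : 0 <= M := pos_INR _.
have Qk_ge0 : 0 <= (4 * Q) ^ k by apply: pow_le; have := pos_INR q.+1; rewrite -/Q; lra.
have A2k_gt0 : 0 < A ^ (2 * k).
  by apply: pow_lt; apply: lt_0_INR; apply/ltP; exact: leq_ltn_trans m_lt_a.
have QM_pow : (G * A ^ 2) ^ k <= (4 * Q) ^ k * (4 * Q) ^ k * M ^ (2 * k).
  rewrite (pow_mult M 2 k) -!Rpow_mult_distr; apply: pow_incr; split.
    by rewrite /G; apply: Rmult_le_pos; [lra | apply: pow2_ge_0].
  have : 0 <= 39 / 40 * A by apply: Rmult_le_pos; [lra | exact: pos_INR].
  rewrite /G; nra.
have QMCa : (G * A ^ 2) ^ k * Ca <= (2 * Cd) * (2 * Cd) * (Ca * M ^ (2 * k)).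
  apply: Rle_trans (Rmult_le_compat_r _ _ _ Ca_ge0 QM_pow) _.
  rewrite Rmult_assoc (Rmult_comm _ Ca); apply: Rmult_le_compat_r.
    by apply: Rmult_le_pos => //; apply: pow_le.
  exact: Rmult_le_compat.
have CaCb : (2 * Cd) * (2 * Cd) * (Ca * M ^ (2 * k)) <= 4 * num * A ^ (2 * k).
  have : Cd * Cd * Cb * A ^ (2 * k) <= num * A ^ (2 * k) by apply: Rmult_le_compat_r; lra.
  have : (2 * Cd) * (2 * Cd) * (Ca * M ^ (2 * k)) <= (2 * Cd) * (2 * Cd) * (Cb * A ^ (2 * k)).
    by apply: Rmult_le_compat_l => //; have := pos_INR 'C(d, k); rewrite -/Cd; nra.
  lra.
apply: (Rmult_le_reg_r _ _ _ A2k_gt0); apply: Rle_trans CaCb.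
by rewrite Rmult_assoc (Rmult_comm Ca) -Rmult_assoc (pow_mult A 2 k) -Rpow_mult_distr.
Qed.

Lemma large_ratio_count : 2 ^ t * INR 'C(N, m) <= INR (num_sum_free (N + N) m).
Proof.
have gain := pow_gain t_ge; rewrite -/G -/E -/k in gain.
have E_gt0 : 0 < 3 ^ E by apply: pow_lt; lra.
have G_ge0 : 0 <= G ^ k by apply: pow_le; rewrite /G; lra.
have C_ge0 := pos_INR 'C(N, m).
have h1 : 4 * 3 ^ E * 2 ^ t * INR 'C(N, m) <= G ^ k * INR 'C(N, m).
  exact: Rmult_le_compat_r.
have h2 : G ^ k * INR 'C(N, m) <= G ^ k * (3 ^ E * INR 'C(a, m)).
  exact: Rmult_le_compat_l bin_N_le.
have h3 : 3 ^ E * (G ^ k * INR 'C(a, m)) <= 3 ^ E * (4 * INR (num_sum_free (N + N) m)).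
  by apply: Rmult_le_compat_l; [lra | exact: blocks_gain].
by apply: (Rmult_le_reg_l (4 * 3 ^ E)); lra.
Qed.

Lemma large_ratio_bound :
  Rpower 2 (1 / 100000000 * INR (N + N) / INR m) * INR 'C(N, m) <=
  INR (num_sum_free (N + N) m).
Proof.
apply: Rle_trans large_ratio_count; apply: Rmult_le_compat_r; first exact: pos_INR.
rewrite -Rpower_pow; last lra.
have m_pos : 0 < INR m by apply: lt_0_INR; apply/ltP.
have := INR_leq (ltnW N_lt_t); have := INR_leq t_ge.
rewrite !mult_INR plus_INR (S_INR t) (INR_IZR_INZ 320) (INR_IZR_INZ 9) /= => t_ge9 N_le.
apply: Rle_Rpower; first lra.
apply: (Rmult_le_reg_r _ _ _ m_pos).
have -> : 1 / 100000000 * (INR N + INR N) / INR m * INR m = 1 / 100000000 * (INR N + INR N).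
  by field; lra.
nra.
Qed.

End LargeRatio.

Section SmallRatio.
Local Open Scope R_scope.

Lemma small_ratio_bound N m : (1 < N)%N -> (0 < m)%N -> (N < 3000 * m)%N ->
  Rpower 2 (1 / 100000000 * INR (N + N) / INR m) * INR 'C(N, m) <=
  INR (num_sum_free (N + N) m).
Proof.
move=> N_gt1 m_gt0 N_lt.
have N_pos : 0 < INR N by apply: lt_0_INR; apply/ltP; lia.
have m_pos : 0 < INR m by apply: lt_0_INR; apply/ltP.
have N_ltR : INR N < 3000 * INR m.
  by have := lt_INR _ _ (ltP N_lt); rewrite mult_INR (INR_IZR_INZ 3000).
have := Rpower2_small_ratio m_pos N_pos N_ltR.
have := INR_leq (num_sum_free_ge_halves m N_gt1); rewrite !mult_INR !plus_INR.
have := pos_INR 'C(N, m); nra.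
Qed.

End SmallRatio.

Theorem proposition3p1 :
  exists c : R, Rlt 0 c /\
    forall n m : nat, ~~ odd n -> Rle (sqrt (INR n)) (INR m) ->
      Rle (Rmult (Rpower 2 (Rdiv (Rmult c (INR n)) (INR m))) (INR 'C(n./2, m)))
          (INR (num_sum_free n m)).
Proof.
exists (Rdiv 1 100000000); split; first lra.
move=> n m n_even.
have [N ->] : exists N, n = N + N.
  by exists n./2; rewrite addnn -[LHS]odd_double_half (negbTE n_even).
have -> : (N + N)./2 = N by rewrite addnn doubleK.
move=> sqrt_le.
case: (ltnP N m) => [N_lt_m | m_le_N].
  by rewrite bin_small //= Rmult_0_r; exact: pos_INR.
have m_sq : N + N <= m * m.
  apply/leP/INR_le; rewrite mult_INR -(sqrt_sqrt (INR (N + N)) (pos_INR _)).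
  by apply: Rmult_le_compat => //; exact: sqrt_pos.
case: (ltnP 0 m) => [m_gt0 | m_le0]; last first.
  have m0 : m = 0 by lia.
  have N0 : N = 0 by move: m_sq; rewrite m0; lia.
  rewrite m0 N0 /Rdiv Rmult_0_r Rmult_0_l Rpower_O; last lra.
  by rewrite bin0 Rmult_1_l; apply: (@INR_leq 1); exact: num_sum_free0_gt0.
have N_gt1 : 1 < N by nia.
case: (ltnP (N %/ m) 3000) => [q_small | q_large].
  apply: small_ratio_bound => //; apply: leq_trans (ltn_ceil N m_gt0) _.
  by rewrite leq_mul2r q_small orbT.
by apply: (large_ratio_bound m_sq m_gt0 q_large (leq_divM N m) (ltn_ceil N m_gt0)
  (leq_divM _ 320) (ltn_ceil _ _)).
Qed.
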